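(* Fix $\epsilon,\phi\in\mathbb R$ with $|\phi|>1$ and $\epsilon\ne\phi$. For each $n$, let $(\nu_n,\mathbf y_n)$ be an eigenpair of $T_{n,\epsilon,\phi}$ with $\|\mathbf y_n\|_2=1$, and suppose $\nu_n\to\phi+\phi^{-1}$ as $n\to\infty$. Then: 1. Eventually, $\nu_n$ is an outlier of $T_{n,\epsilon,\phi}$, and there is a constant $c>0$ independent of $n$ such that eventually every eigenvalue $\lambda_n\ne\nu_n$ of $T_{n,\epsilon,\phi}$ satisfies $|\lambda_n-(\phi+\phi^{-1})|\ge c$. 2. $\|\mathbf y_n-P_{\mathbf w_n}\mathbf y_n\|_2\to0$ as $n\to\infty$, where $\mathbf w_n=[\phi^{-n+1},\ldots,\phi^{-1},1]^\top$.
   Context: For $n\ge2$ and real parameters $\epsilon,\phi$, $T_{n,\epsilon,\phi}$ is the real symmetric tridiagonal $n\times n$ matrix with diagonal entries $(\epsilon,0,\ldots,0,\phi)$ and all sub- and super-diagonal entries equal to $1$. An outlier is an eigenvalue not in $[-2,2]$. For $\mathbf u\in\mathbb R^n\setminus\{0\}$, $P_{\mathbf u}$ denotes the orthogonal projector onto $\mathrm{span}\{\mathbf u\}$: $P_{\mathbf u}\mathbf x=\frac{\mathbf x^\top\mathbf u}{\mathbf u^\top\mathbf u}\mathbf u$. *)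

From HB Require Import structures.
From mathcomp Require Import all_boot all_order all_algebra.
From mathcomp Require Import all_classical all_reals all_analysis.
Set Implicit Arguments. Unset Strict Implicit. Unset Printing Implicit Defensive.
Import Order.TTheory GRing.Theory Num.Theory.
Local Open Scope ring_scope.

Section Defs.
Variable R : realType.

(* T_{n,eps,phi}: symmetric tridiagonal, diagonal (eps,0,...,0,phi),
   off-diagonals 1.  Meaningful for n >= 2. *)
Definition Tmat (n : nat) (eps phi : R) : 'M[R]_n :=
  \matrix_(i < n, j < n)
    if i == j then
      (if (i : nat) == 0%N then eps else if (i : nat) == n.-1 then phi else 0)
    else if ((i : nat) == j.+1) || ((j : nat) == i.+1) then 1 else 0.

Definition vnorm2 (n : nat) (v : 'cV[R]_n) : R :=
  Num.sqrt (\sum_(i < n) v i 0 ^+ 2).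

Definition projspan (n : nat) (u x : 'cV[R]_n) : 'cV[R]_n :=
  ((x^T *m u) 0 0 / (u^T *m u) 0 0) *: u.

Definition wvec (n : nat) (phi : R) : 'cV[R]_n :=
  \col_(i < n) phi ^- (n.-1 - i)%N.

Definition outlier (n : nat) (A : 'M[R]_n) (x : R) : Prop :=
  eigenvalue A x /\ ~ (-2 <= x <= 2).

End Defs.

From HB Require Import structures.
From mathcomp Require Import all_boot all_order all_algebra.
From mathcomp Require Import all_classical all_reals all_analysis.
From mathcomp Require Import ring lra zify.
Import Order.TTheory GRing.Theory Num.Theory.
Import numFieldNormedType.Exports.
Set Implicit Arguments. Unset Strict Implicit. Unset Printing Implicit Defensive.
Local Open Scope classical_set_scope.
Local Open Scope ring_scope.

(* Write lam0 = phi + phi^-1, r = |phi|^-1 < 1 and d = mu - lam0. The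
   coordinates of an eigenvector of T_n for mu solve x_(k-1) + x_(k+1) = mu x_k
   with the boundary row eps x_0 + x_1 = mu x_0. Splitting x into its
   components along the growing mode phi^k and the decaying mode phi^-k, both
   obey contractive recursions with ratio r forced by O(|d|) terms; the
   boundary row with eps <> phi forces x_0 = O(r^n + |d|), and therefore x is
   l^2-close, up to O(r^n + |d|), to a multiple of w_n (recurrence_localization).

   Uniformly in n large, unit
   eigenvectors with eigenvalue near lam0 are then close to span{w_n}
   (localization_eventually). The theorem follows: nu_n is an outlier since
   |lam0| > 2; a second eigenvalue near lam0 would produce two orthonormal
   vectors close to the same line; and y_n is close to span{w_n}. *)

Section GeometricRecurrences.
Variable R : realFieldType.
Implicit Types (r u v : R) (a b : nat -> R).

Lemma sqr_le_contract r u v (b : R) : 0 <= r -> r < 1 ->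
  `|u| <= r * `|v| + `|b| -> u ^+ 2 <= r * v ^+ 2 + b ^+ 2 / (1 - r).
Proof.
move=> r0 r1 h; rewrite -(real_normK (num_real u)) -(real_normK (num_real v)).
rewrite -(real_normK (num_real b)).
set p := `|v|; set q := `|b|; have p0 : 0 <= p := normr_ge0 v.
have q0 : 0 <= q := normr_ge0 b.
have hu : `|u| ^+ 2 <= (r * p + q) ^+ 2.
  by apply: lerXn2r; rewrite ?nnegrE ?addr_ge0 ?mulr_ge0.
apply: le_trans hu _; have s0 : 0 < 1 - r by lra.
rewrite -(ler_pM2r s0) mulrDl (mulrAC _ _ (1 - r)) mulfVK ?gt_eqF //.
have : 0 <= r * ((1 - r) * p - q) ^+ 2 by rewrite mulr_ge0 ?sqr_ge0.
nra.
Qed.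

Lemma l2_forward r a b N : 0 <= r -> r < 1 ->
  (forall k, (k < N)%N -> `|a k.+1| <= r * `|a k| + `|b k|) ->
  (1 - r) * \sum_(k < N.+1) a k ^+ 2 <=
    a 0%N ^+ 2 + (\sum_(k < N) b k ^+ 2) / (1 - r).
Proof.
move=> r0 r1 h.
have hs : \sum_(k < N) a k.+1 ^+ 2 <=
          r * \sum_(k < N) a k ^+ 2 + (\sum_(k < N) b k ^+ 2) / (1 - r).
  rewrite mulr_sumr mulr_suml -big_split /=.
  by apply: ler_sum => k _; apply: sqr_le_contract => //; apply: h.
have hlast : \sum_(k < N) a k ^+ 2 <= \sum_(k < N.+1) a k ^+ 2.
  by rewrite [X in _ <= X]big_ord_recr /= lerDl sqr_ge0.
have hfirst : \sum_(k < N.+1) a k ^+ 2 = a 0%N ^+ 2 + \sum_(k < N) a k.+1 ^+ 2.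
  by rewrite big_ord_recl.
rewrite hfirst in hlast *.
have : 0 <= \sum_(k < N) a k ^+ 2 by rewrite sumr_ge0 // => k _; rewrite sqr_ge0.
nra.
Qed.

(* The same bound for a backward recursion, controlled by the last term;
   it is the forward bound for the reversed sequences. *)
Lemma l2_backward r a b N : 0 <= r -> r < 1 ->
  (forall k, (k < N)%N -> `|a k| <= r * `|a k.+1| + `|b k|) ->
  (1 - r) * \sum_(k < N.+1) a k ^+ 2 <=
    a N ^+ 2 + (\sum_(k < N) b k ^+ 2) / (1 - r).
Proof.
move=> r0 r1 h.
have rev (f : nat -> R) n :
    \sum_(k < n) f k = \sum_(k < n) f (n - k.+1)%N.
  by rewrite -(big_mkord xpredT) big_nat_rev add0n big_mkord.
have hrev k : (k < N)%N ->
    `|a (N.+1 - k.+2)%N| <= r * `|a (N.+1 - k.+1)%N| + `|b (N - k.+1)%N|.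
  move=> hk; have -> : (N.+1 - k.+2 = N - k.+1)%N by lia.
  have -> : (N.+1 - k.+1 = (N - k.+1).+1)%N by lia.
  by apply: h; lia.
have := l2_forward (a := fun k => a (N.+1 - k.+1)%N) (b := fun k => b (N - k.+1)%N)
  r0 r1 hrev.
rewrite /= subSS subn0.
by rewrite (rev (fun k => a k ^+ 2)) (rev (fun k => b k ^+ 2)).
Qed.

Lemma geo_backward_sup r (be : R) a N : 0 <= r -> r < 1 -> 0 <= be ->
  (forall k, (k < N)%N -> `|a k| <= r * `|a k.+1| + be) ->
  `|a 0%N| <= r ^+ N * `|a N| + be / (1 - r).
Proof.
move=> r0 r1 be0; elim: N a => [|N IH] a h.
  by rewrite expr0 mul1r lerDl divr_ge0 // subr_ge0 ltW.
have tail_bound := IH (fun k => a k.+1) (fun k hk => h k.+1 hk); simpl in tail_bound.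
have first_step := h 0%N isT.
have fixpt : be / (1 - r) = r * (be / (1 - r)) + be by field; lra.
rewrite exprS -mulrA fixpt.
have : r * `|a 1%N| <= r * (r ^+ N * `|a N.+1| + be / (1 - r)) by apply: ler_wpM2l.
lra.
Qed.

End GeometricRecurrences.

(* The constant K(phi, eps) of the localization estimate; it collects the
   bounds on the first coordinate (C0) and on the boundary row (C1) below. *)
Definition loc_const (R : realFieldType) (phi eps : R) : R :=
  let r := `|phi|^-1 in
  let C0 := (2 + r / (1 - r)) / (`|phi - eps| / 2) in
  let C1 := r + 1 + `|eps| in
  r ^+ 2 / (1 - r) ^+ 3 * (C1 ^+ 2 * C0 ^+ 2 + 1 / (1 - r)).

Lemma loc_const_gt0 (R : realFieldType) (phi eps : R) :
  1 < `|phi| -> eps != phi -> 0 < loc_const phi eps.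
Proof.
move=> phi_gt1 eps_neq; rewrite /loc_const.
have r0 : 0 < `|phi|^-1 by rewrite invr_gt0; lra.
have r1 : `|phi|^-1 < 1 by rewrite invf_lt1 //; lra.
have s0 : 0 < 1 - `|phi|^-1 by rewrite subr_gt0.
apply: mulr_gt0; first by apply: divr_gt0; apply: exprn_gt0.
by apply: ltr_wpDl; [apply: mulr_ge0; apply: sqr_ge0 | apply: divr_gt0].
Qed.

Section RecurrenceLocalization.
Variable R : realFieldType.
Variables (phi eps mu : R) (M : nat) (x : nat -> R).
Hypothesis phi_gt1 : 1 < `|phi|.
Hypothesis eps_neq_phi : eps != phi.
Hypothesis x_head : eps * x 0%N + x 1%N = mu * x 0%N.
Hypothesis x_bulk : forall j, (j < M)%N -> x j + x j.+2 = mu * x j.+1.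
Hypothesis x_mass : \sum_(k < M.+2) x k ^+ 2 <= 1.
Let d := mu - (phi + phi^-1).
Hypothesis d_le1 : `|d| <= 1.
Hypothesis d_gap : 2 * `|d| <= `|phi - eps|.

Let r := `|phi|^-1.
Let s := r ^+ M + `|d|.

Let r_gt0 : 0 < r. Proof. by rewrite /r invr_gt0 (lt_trans ltr01). Qed.
Let r_lt1 : r < 1. Proof. by rewrite /r invf_lt1 // (lt_trans ltr01). Qed.
Let phi_neq0 : phi != 0. Proof. by rewrite -normr_gt0 (lt_trans ltr01). Qed.
Let normVphiM a : `|phi^-1 * a| = r * `|a|. Proof. by rewrite normrM normfV. Qed.
Let x_bulk' j : (j < M)%N -> x j.+2 = mu * x j.+1 - x j.
Proof. by move=> hj; rewrite -x_bulk //; ring. Qed.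
Let x_one : x 1%N = (mu - eps) * x 0%N. Proof. by rewrite mulrBl -x_head; ring. Qed.

Let x_le1 k : (k < M.+2)%N -> `|x k| <= 1.
Proof.
move=> hk; have hk2 : x k ^+ 2 <= 1.
  apply: le_trans x_mass; rewrite (bigD1 (Ordinal hk)) //= lerDl.
  by rewrite sumr_ge0 // => i _; rewrite sqr_ge0.
by rewrite -(real_normK (num_real (x k))) in hk2; have := normr_ge0 (x k); nra.
Qed.

(* Component of x along the growing mode phi^k of the unperturbed recursion
   x_(k+1) + x_(k-1) = (phi + phi^-1) x_k; it is propagated backwards with
   ratio phi^-1 up to an O(|d|) forcing, so it is tiny at k = 0. *)
Let grow k := x k.+1 - phi^-1 * x k.

Let grow_backward j : (j < M)%N -> `|grow j| <= r * `|grow j.+1| + r * `|d|.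
Proof.
move=> hj.
have -> : grow j = phi^-1 * (grow j.+1 - d * x j.+1).
  by rewrite /grow x_bulk' // /d; field.
rewrite normVphiM -mulrDr; apply: ler_wpM2l; first exact: ltW.
apply: le_trans (ler_normB _ _) _; rewrite lerD2l normrM.
by rewrite ler_piMr ?normr_ge0 // x_le1 //; lia.
Qed.

(* Since eps <> phi the boundary row ties grow 0 to x 0 with a factor bounded
   away from zero, so the first coordinate is O(r^M + |d|). *)
Let head_small :
  `|x 0%N| <= (2 + r / (1 - r)) / (`|phi - eps| / 2) * s.
Proof.
have g0 : 0 < `|phi - eps| / 2 by rewrite divr_gt0 // normr_gt0 subr_eq0 eq_sym.
have grow0 : grow 0%N = (phi - eps + d) * x 0%N by rewrite /grow x_one /d; ring.
have hg : `|phi - eps| / 2 <= `|phi - eps + d|.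
  have := ler_normB (phi - eps + d) d; rewrite addrK; have := d_gap; lra.
have growM : `|grow M| <= 2.
  rewrite /grow; apply: le_trans (ler_normB _ _) _; rewrite normVphiM.
  have := @x_le1 M.+1 (ltnSn _); have := @x_le1 M (ltnW (ltnSn _)).
  have := normr_ge0 (x M); have := r_lt1; have := r_gt0; nra.
have hsup := geo_backward_sup (ltW r_gt0) r_lt1 (mulr_ge0 (ltW r_gt0) (normr_ge0 d))
  grow_backward.
rewrite mulrAC in hsup; set t := r / (1 - r) in hsup *.
have t0 : 0 <= t by apply: divr_ge0; [exact: ltW | rewrite subr_ge0 ltW].
have rM0 : 0 <= r ^+ M by rewrite exprn_ge0 // ltW.
have hx0 : `|phi - eps| / 2 * `|x 0%N| <= `|grow 0%N|.
  by rewrite grow0 normrM ler_wpM2r.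
rewrite mulrAC ler_pdivlMr // mulrC /s.
have := normr_ge0 d; have := normr_ge0 (grow M); nra.
Qed.

(* Component along the decaying mode phi^-k: it starts at O(|x 0|) and is
   propagated forwards with ratio phi^-1, forced by d * x; hence it is small
   in l^2. *)
Let decay k := x k.+1 - phi * x k.

Let decay_l2 :
  (1 - r) * \sum_(k < M.+1) decay k ^+ 2 <=
    (r + 1 + `|eps|) ^+ 2 * ((2 + r / (1 - r)) / (`|phi - eps| / 2)) ^+ 2 * s ^+ 2
    + s ^+ 2 / (1 - r).
Proof.
have hrec k : (k < M)%N -> `|decay k.+1| <= r * `|decay k| + `|d * x k.+1|.
  move=> hk; have -> : decay k.+1 = phi^-1 * decay k + d * x k.+1.
    by rewrite /decay x_bulk' // /d; field.
  by rewrite -normVphiM ler_normD.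
apply: le_trans (l2_forward (ltW r_gt0) r_lt1 hrec) _.
have hs : `|d| <= s by rewrite /s lerDr exprn_ge0 // ltW.
have s0 : 0 <= s := le_trans (normr_ge0 d) hs.
have s1 : 0 < 1 - r by rewrite subr_gt0.
have C0 : 0 <= (2 + r / (1 - r)) / (`|phi - eps| / 2).
  apply: divr_ge0; last by apply: divr_ge0.
  by apply: addr_ge0 => //; apply: divr_ge0; apply: ltW.
have C1 : 0 <= r + 1 + `|eps| by have := r_gt0; have := normr_ge0 eps; lra.
have hx0 := head_small; set c0 := (2 + r / (1 - r)) / _ in C0 hx0 *.
apply: lerD.
  have -> : decay 0%N = (phi^-1 - eps + d) * x 0%N by rewrite /decay x_one /d; ring.
  have hf : `|phi^-1 - eps + d| <= r + 1 + `|eps|.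
    have := ler_normD (phi^-1 - eps) d; have := ler_normB phi^-1 eps.
    rewrite normfV -/r; have := d_le1; lra.
  rewrite -(real_normK (num_real (_ * x 0%N))) normrM -!exprMn.
  apply: lerXn2r; rewrite ?nnegrE.
  - exact: mulr_ge0 (normr_ge0 _) (normr_ge0 _).
  - exact: mulr_ge0 (mulr_ge0 C1 C0) s0.
  - by rewrite -mulrA; apply: ler_pM.
apply: ler_wpM2r; first by rewrite invr_ge0 subr_ge0 ltW.
under eq_bigr do rewrite exprMn.
rewrite -mulr_sumr (@le_trans _ _ (d ^+ 2)) //.
  rewrite ler_piMr ?sqr_ge0 //; apply: le_trans x_mass.
  have -> : \sum_(k < M.+2) x k ^+ 2 =
            x 0%N ^+ 2 + (\sum_(k < M) x k.+1 ^+ 2 + x M.+1 ^+ 2).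
    by rewrite big_ord_recl big_ord_recr.
  by rewrite addrCA lerDl addr_ge0 ?sqr_ge0.
by rewrite -(real_normK (num_real d)) lerXn2r ?nnegrE.
Qed.

(* Deviation of x from the pure decaying profile phi^-(M+1-k) x_(M+1) anchored
   at the last coordinate: it vanishes at k = M+1 and obeys a contractive
   backward recursion forced by the decaying component. *)
Let resid k := x k - phi ^- (M.+1 - k) * x M.+1.

Let resid_l2 :
  (1 - r) * \sum_(k < M.+2) resid k ^+ 2 <=
    r ^+ 2 * (\sum_(k < M.+1) decay k ^+ 2) / (1 - r).
Proof.
have hrec k : (k < M.+1)%N -> `|resid k| <= r * `|resid k.+1| + `|phi^-1 * decay k|.
  move=> hk; have -> : resid k = phi^-1 * (resid k.+1 - decay k).
    by rewrite /resid /decay subSn // subSS -!exprVn exprS; field.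
  rewrite !normVphiM -mulrDr; apply: ler_wpM2l; [exact: ltW | exact: ler_normB].
have := l2_backward (ltW r_gt0) r_lt1 hrec.
rewrite /resid subnn expr0 invr1 mul1r subrr expr0n add0r.
suff -> : \sum_(k < M.+1) (phi^-1 * decay k) ^+ 2 = r ^+ 2 * \sum_(k < M.+1) decay k ^+ 2.
  by [].
rewrite mulr_sumr; apply: eq_bigr => k _.
by rewrite exprMn -(real_normK (num_real phi^-1)) normfV.
Qed.

Lemma recurrence_localization :
  \sum_(k < M.+2) (x k - phi ^- (M.+1 - k) * x M.+1) ^+ 2 <=
    loc_const phi eps * s ^+ 2.
Proof.
have s1 : 0 < 1 - r by rewrite subr_gt0.
have hE := resid_l2; have hQ := decay_l2.
rewrite -ler_pdivlMl // in hE; rewrite -ler_pdivlMl // in hQ.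
apply: le_trans hE _.
set A := _ ^+ 2 * _ ^+ 2 in hQ; set SQ := \sum_(k < M.+1) _ in hQ *.
have -> : loc_const phi eps * s ^+ 2 =
          (1 - r)^-1 * (r ^+ 2 * ((1 - r)^-1 * (A * s ^+ 2 + s ^+ 2 / (1 - r))) / (1 - r)).
  rewrite /loc_const -/r /A; set C := (2 + r / (1 - r)) / _.
  by field; rewrite gt_eqF.
have s1' : 0 <= (1 - r)^-1 by rewrite invr_ge0 ltW.
apply: ler_wpM2l => //; apply: ler_wpM2r => //.
by apply: ler_wpM2l; first exact: sqr_ge0.
Qed.

End RecurrenceLocalization.

Section ColumnGeometry.
Variable R : realFieldType.
Implicit Types (n : nat).

Definition sqnorm2 n (v : 'cV[R]_n) : R := \sum_(i < n) v i 0 ^+ 2.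

Lemma sqnorm2_eq0 n (v : 'cV[R]_n) : (sqnorm2 v == 0) = (v == 0).
Proof.
apply/eqP/eqP => [hv|->]; last by rewrite /sqnorm2 big1 // => i _; rewrite mxE expr0n.
have hv0 := psumr_eq0P (fun k _ => sqr_ge0 (v k 0)) hv.
apply/matrixP => i j; rewrite ord1 mxE; apply/eqP; rewrite -sqrf_eq0.
by rewrite hv0.
Qed.

Lemma sqnorm2_gt0 n (v : 'cV[R]_n) : (0 < sqnorm2 v) = (v != 0).
Proof.
by rewrite lt0r sqnorm2_eq0 sumr_ge0 ?andbT // => i _; rewrite sqr_ge0.
Qed.

Lemma dotE n (v w : 'cV[R]_n) : (v^T *m w) 0 0 = \sum_(i < n) v i 0 * w i 0.
Proof. by rewrite mxE; apply: eq_bigr => i _; rewrite mxE. Qed.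

End ColumnGeometry.

Section LineApproximation.
Variable R : realType.
Implicit Types (n : nat) (a b c : R).

Lemma vnorm2_sqr n (v : 'cV[R]_n) : vnorm2 v ^+ 2 = sqnorm2 v.
Proof. by rewrite sqr_sqrtr // sumr_ge0 // => i _; rewrite sqr_ge0. Qed.

Lemma sqnorm2_lincomb n (v w : 'cV[R]_n) c :
  sqnorm2 (v - c *: w) =
  sqnorm2 v - c *+ 2 * \sum_(i < n) v i 0 * w i 0 + c ^+ 2 * sqnorm2 w.
Proof.
rewrite /sqnorm2 !mulr_sumr -sumrB -big_split; apply: eq_bigr => i _ /=.
by rewrite !mxE; ring.
Qed.

Lemma projspan_best n (v w : 'cV[R]_n) c : 0 < sqnorm2 w ->
  sqnorm2 (v - projspan w v) <= sqnorm2 (v - c *: w).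
Proof.
move=> w0; rewrite /projspan !dotE !sqnorm2_lincomb.
set B := \sum_(i < n) v i 0 * w i 0; set W := sqnorm2 w.
have -> : \sum_(i < n) w i 0 * w i 0 = W by apply: eq_bigr => i _; rewrite expr2.
rewrite -subr_ge0.
have -> : sqnorm2 v - c *+ 2 * B + c ^+ 2 * W -
          (sqnorm2 v - B / W *+ 2 * B + (B / W) ^+ 2 * W) = W * (c - B / W) ^+ 2.
  by field; rewrite gt_eqF.
by rewrite mulr_ge0 ?sqr_ge0 ?ltW.
Qed.

Lemma orthonormal_not_near_line n (y u w : 'cV[R]_n) a b :
  sqnorm2 y = 1 -> sqnorm2 u = 1 -> \sum_(i < n) y i 0 * u i 0 = 0 ->
  sqnorm2 (y - a *: w) <= 1 / 4 -> sqnorm2 (u - b *: w) <= 1 / 4 -> False.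
Proof.
move=> hy hu hyu hyw huw.
have hnorm : sqnorm2 (b *: y - a *: u) = b ^+ 2 + a ^+ 2.
  have -> : sqnorm2 (b *: y - a *: u) = b ^+ 2 * sqnorm2 y
      - 2 * a * b * \sum_(i < n) y i 0 * u i 0 + a ^+ 2 * sqnorm2 u.
    rewrite /sqnorm2 !mulr_sumr -sumrB -big_split; apply: eq_bigr => i _ /=.
    by rewrite !mxE; ring.
  by rewrite hy hu hyu; ring.
have hsplit : sqnorm2 (b *: y - a *: u) <=
    2 * b ^+ 2 * sqnorm2 (y - a *: w) + 2 * a ^+ 2 * sqnorm2 (u - b *: w).
  rewrite /sqnorm2 !mulr_sumr -big_split; apply: ler_sum => i _ /=; rewrite !mxE.
  set p := y i 0 - a * w i 0; set q := u i 0 - b * w i 0.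
  have -> : b * y i 0 - a * u i 0 = b * p - a * q by rewrite /p /q; ring.
  by have := sqr_ge0 (b * p + a * q); nra.
have a0 : a = 0.
  have := sqr_ge0 a; have := sqr_ge0 b.
  have : 2 * b ^+ 2 * sqnorm2 (y - a *: w) <= b ^+ 2 / 2 by nra.
  have : 2 * a ^+ 2 * sqnorm2 (u - b *: w) <= a ^+ 2 / 2 by nra.
  by move=> h1 h2 hb ha; apply/eqP; rewrite -sqrf_eq0; apply/eqP; nra.
by move: hyw; rewrite a0 scale0r subr0 hy; lra.
Qed.

End LineApproximation.

Section SymmetricEigenvectors.
Variable R : realType.
Variables (n : nat) (A : 'M[R]_n).
Hypothesis A_sym : A^T = A.

Lemma sym_eigvec_row (v : 'cV[R]_n) a : A *m v = a *: v -> v^T *m A = a *: v^T.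
Proof. by move=> hv; rewrite -[in LHS]A_sym -trmx_mul hv linearZ. Qed.

Lemma sym_eigvec_orth (v u : 'cV[R]_n) a b :
  A *m v = a *: v -> A *m u = b *: u -> a != b -> \sum_(i < n) v i 0 * u i 0 = 0.
Proof.
move=> hv hu hab.
have : (a - b) *: (v^T *m u) = 0.
  by rewrite scalerBl scalemxAl -(sym_eigvec_row hv) -mulmxA hu -scalemxAr subrr.
move/eqP; rewrite scaler_eq0 subr_eq0 (negbTE hab) /= => /eqP huv.
by rewrite -dotE huv mxE.
Qed.

(* A nonzero column eigenvector witnesses an eigenvalue (which MathComp
   defines through row eigenvectors). *)
Lemma sym_eigenvalue_col (v : 'cV[R]_n) a :
  A *m v = a *: v -> v != 0 -> eigenvalue A a.
Proof.
move=> hv v0; apply/eigenvalueP; exists v^T; first exact: sym_eigvec_row.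
by rewrite trmx_eq0.
Qed.

Lemma sym_unit_eigvec a : eigenvalue A a ->
  exists u : 'cV[R]_n, A *m u = a *: u /\ sqnorm2 u = 1.
Proof.
case/eigenvalueP => rv hrv rv0.
have hcol : A *m rv^T = a *: rv^T by rewrite -[in LHS]A_sym -trmx_mul hrv linearZ.
have S0 : 0 < sqnorm2 rv^T by rewrite sqnorm2_gt0 trmx_eq0.
exists ((Num.sqrt (sqnorm2 rv^T))^-1 *: rv^T); split.
  by rewrite -scalemxAr hcol !scalerA mulrC.
rewrite /sqnorm2; under eq_bigr do rewrite mxE exprMn.
by rewrite -mulr_sumr exprVn sqr_sqrtr ?mulVf ?gt_eqF ?ltW.
Qed.

End SymmetricEigenvectors.

Section TridiagonalEigenvectors.
Variable R : realType.
Variables eps phi : R.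

Lemma Tmat_sym n : (Tmat n eps phi)^T = Tmat n eps phi.
Proof.
apply/matrixP => i j; rewrite !mxE eq_sym.
by case: eqP => [-> //|_]; rewrite orbC.
Qed.

(* The last entry of w_n is 1. *)
Lemma wvec_neq0 n : (0 < n)%N -> wvec n phi != 0.
Proof.
case: n => // n _; apply/eqP => /matrixP/(_ ord_max 0).
by rewrite !mxE subnn expr0 invr1 => /eqP; rewrite oner_eq0.
Qed.

Let sum_indicator N (f : 'I_N.+1 -> R) k :
  \sum_(j < N.+1) ((j : nat) == k)%:R * f j = if (k <= N)%N then f (inord k) else 0.
Proof.
case: leqP => hk.
  rewrite (bigD1 (inord k)) //= inordK // eqxx mul1r big1 ?addr0 // => j hj.
  suff /negbTE -> : (j : nat) != k by rewrite mul0r.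
  by apply: contraNneq hj => <-; rewrite inord_val.
by rewrite big1 // => j _; rewrite (_ : (j : nat) == k = false) ?mul0r //; have := ltn_ord j; lia.
Qed.

Lemma Tmat_mul_row M (v : 'cV[R]_M.+2) k : (k < M.+2)%N ->
  (Tmat M.+2 eps phi *m v) (inord k) 0 =
    (if k == 0%N then eps else if k == M.+1 then phi else 0) * v (inord k) 0
    + (if k is k'.+1 then v (inord k') 0 else 0)
    + (if (k < M.+1)%N then v (inord k.+1) 0 else 0).
Proof.
move=> hk; rewrite mxE.
have entry (j : 'I_M.+2) : Tmat M.+2 eps phi (inord k) j =
    ((j : nat) == k)%:R * (if k == 0%N then eps else if k == M.+1 then phi else 0)
    + ((j : nat).+1 == k)%:R + ((j : nat) == k.+1)%:R.
  rewrite mxE inordK // -(inj_eq val_inj) /= inordK // [k == j]eq_sym.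
  case: eqP => [->|_]; first by rewrite mul1r (gtn_eqF (ltnSn k)) (ltn_eqF (ltnSn k)) !addr0.
  rewrite mul0r add0r [k == _]eq_sym.
  by case: (j.+1 =P k) => [e1|_]; case: ((j : nat) =P k.+1) => [e2|_] //=;
    rewrite ?addr0 ?add0r //; lia.
under eq_bigr do rewrite entry !mulrDl.
rewrite !big_split /=; under eq_bigr do rewrite mulrAC.
rewrite -mulr_suml sum_indicator (_ : (k <= M.+1)%N) 1?mulrC; last by lia.
congr (_ + _ + _); last by rewrite sum_indicator.
case: k hk {entry} => [|k] hk /=; first by rewrite big1 // => j _; rewrite mul0r.
by under eq_bigr do rewrite eqSS; rewrite sum_indicator (_ : (k <= M.+1)%N) //; lia.
Qed.

Lemma Tmat_eigvec_recurrence M (v : 'cV[R]_M.+2) mu :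
  Tmat M.+2 eps phi *m v = mu *: v ->
  let x k := v (inord k) 0 in
  (eps * x 0%N + x 1%N = mu * x 0%N) /\
  (forall j, (j < M)%N -> x j + x j.+2 = mu * x j.+1).
Proof.
move=> hv x; have row k : (k < M.+2)%N -> (Tmat M.+2 eps phi *m v) (inord k) 0 = mu * x k.
  by move=> _; rewrite hv mxE.
split; first by rewrite -row // Tmat_mul_row //= addr0.
move=> j hj; rewrite -row; last lia.
rewrite Tmat_mul_row; last lia.
have -> : (j.+1 == M.+1) = false by apply/eqP; lia.
have -> : (j.+1 < M.+1)%N = true by lia.
by rewrite mul0r add0r.
Qed.

Lemma Tmat_eigvec_localization M (v : 'cV[R]_M.+2) mu :
  1 < `|phi| -> eps != phi -> Tmat M.+2 eps phi *m v = mu *: v ->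
  sqnorm2 v <= 1 ->
  `|mu - (phi + phi^-1)| <= 1 -> 2 * `|mu - (phi + phi^-1)| <= `|phi - eps| ->
  sqnorm2 (v - v ord_max 0 *: wvec M.+2 phi) <=
    loc_const phi eps * (`|phi|^-1 ^+ M + `|mu - (phi + phi^-1)|) ^+ 2.
Proof.
move=> phi_gt1 eps_neq hv hmass hd1 hd2.
have [x_head x_bulk] := Tmat_eigvec_recurrence hv.
set x := fun k => v (inord k) 0 in x_head x_bulk.
have xE (i : 'I_M.+2) : v i 0 = x i by rewrite /x inord_val.
have xM : v ord_max 0 = x M.+1 by rewrite /x; congr (v _ 0); apply/val_inj; rewrite /= inordK.
have x_mass : \sum_(k < M.+2) x k ^+ 2 <= 1.
  by apply: le_trans hmass; rewrite le_eqVlt; apply/orP; left;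
    apply/eqP/eq_bigr => i _; rewrite xE.
apply: le_trans (recurrence_localization phi_gt1 eps_neq x_head x_bulk x_mass hd1 hd2).
rewrite le_eqVlt; apply/orP; left; apply/eqP/eq_bigr => i _.
by rewrite !mxE -/(x i) -/(x M.+1) -xE -xM mulrC.
Qed.

End TridiagonalEigenvectors.

Lemma outlier_limit_gt2 (R : realFieldType) (phi : R) :
  1 < `|phi| -> 2 < `|phi + phi^-1|.
Proof.
move=> phi_gt1; have phi0 : 0 < `|phi| by lra.
have -> : `|phi + phi^-1| = `|phi| + `|phi|^-1.
  have [phi_lt0|phi_ge0] := ltP phi 0.
    have : phi^-1 < 0 by rewrite invr_lt0.
    by move=> hi; rewrite !ltr0_norm ?invrN ?opprD //; lra.
  have : 0 <= phi^-1 by rewrite invr_ge0.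
  by move=> hi; rewrite !ger0_norm //; lra.
rewrite -subr_gt0 (_ : _ - 2 = (`|phi| - 1) ^+ 2 / `|phi|); last by field; rewrite gt_eqF.
by rewrite divr_gt0 // exprn_even_gt0 //= subr_eq0 gt_eqF.
Qed.

Section TridiagonalAsymptotics.
Variable R : realType.
Variables eps phi : R.
Hypothesis phi_gt1 : 1 < `|phi|.
Hypothesis eps_neq_phi : eps != phi.

Lemma localization_eventually (delta : R) : 0 < delta ->
  exists2 t : R, 0 < t &
    \forall n \near \oo, forall (mu : R) (v : 'cV[R]_n),
      `|mu - (phi + phi^-1)| <= t -> Tmat n eps phi *m v = mu *: v ->
      sqnorm2 v = 1 -> exists c : R, sqnorm2 (v - c *: wvec n phi) <= delta.
Proof.
move=> delta0; set K := loc_const phi eps.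
have K0 : 0 < K := loc_const_gt0 phi_gt1 eps_neq_phi.
have g0 : 0 < `|phi - eps| / 2 by rewrite divr_gt0 // normr_gt0 subr_eq0 eq_sym.
set t := Num.min (Num.min 1 (`|phi - eps| / 2)) (delta / (4 * (K + 1))).
have [t1 t2 t3] : [/\ t <= 1, t <= `|phi - eps| / 2 & t <= delta / (4 * (K + 1))].
  by have := le_refl t; rewrite {2}/t !le_min => /andP[/andP[-> ->] ->].
have t0 : 0 < t by rewrite !lt_min ltr01 g0 divr_gt0 //; lra.
exists t => //.
set r := `|phi|^-1.
have r0 : 0 <= r by rewrite invr_ge0.
have r1 : `|r| < 1 by rewrite ger0_norm // invf_lt1 // (lt_trans ltr01).
have [N _ rN] := cvgr_dist_le _ _ (cvg_expr r1) _ t0.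
exists N.+2 => // [[|[|M]]] //= hM mu v hmu hv hv1.
exists (v ord_max 0).
have rM : r ^+ M <= t.
  by have := rN M hM; rewrite sub0r normrN ger0_norm ?exprn_ge0.
have hs : `|phi|^-1 ^+ M + `|mu - (phi + phi^-1)| <= 2 * t by rewrite -/r; lra.
apply: le_trans (Tmat_eigvec_localization phi_gt1 eps_neq_phi hv _ _ _) _.
- by rewrite hv1.
- by lra.
- by lra.
rewrite -/K; apply: le_trans (_ : K * (2 * t) ^+ 2 <= _).
  apply: ler_wpM2l; first exact: ltW.
  by rewrite lerXn2r ?nnegrE ?addr_ge0 ?exprn_ge0 ?normr_ge0 //; lra.
rewrite ler_pdivlMr in t3; last lra.
nra.
Qed.

Variables (nu : nat -> R) (y : forall n : nat, 'cV[R]_n).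
Hypothesis y_eigen : forall n : nat, (2 <= n)%N ->
  Tmat n eps phi *m y n = nu n *: y n /\ vnorm2 (y n) = 1.
Hypothesis nu_lim : nu @ \oo --> (phi + phi^-1).

Let y_unit n : (2 <= n)%N -> sqnorm2 (y n) = 1.
Proof. by move=> n2; rewrite -vnorm2_sqr (y_eigen n2).2 expr1n. Qed.

Lemma nu_outlier_eventually : \forall n \near \oo, outlier (Tmat n eps phi) (nu n).
Proof.
have gap0 : 0 < `|phi + phi^-1| - 2 by rewrite subr_gt0 outlier_limit_gt2.
apply: (@filterS2 _ _ _ _ _ _ _ (nbhs_infty_ge 2) (cvgr_distC_lt _ _ nu_lim _ gap0)).
move=> n n2 hnu; split.
  apply: (sym_eigenvalue_col (Tmat_sym eps phi n) (y_eigen n2).1).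
  by rewrite -sqnorm2_gt0 y_unit.
move=> /andP[nu_ge nu_le]; have : `|nu n| <= 2 by rewrite ler_norml nu_ge.
have := ler_normD (phi + phi^-1 - nu n) (nu n); rewrite subrK distrC; lra.
Qed.

(* Part 1b: the other eigenvalues stay a fixed distance away from the
   limit; two eigenvalues in the window would give two orthonormal
   eigenvectors both close to the line spanned by w_n. *)
Lemma eigenvalue_gap_eventually : exists c : R, 0 < c /\
  \forall n \near \oo, forall lam : R,
    eigenvalue (Tmat n eps phi) lam -> lam != nu n ->
    c <= `|lam - (phi + phi^-1)|.
Proof.
have quarter0 : 0 < 1 / 4 :> R by rewrite divr_gt0.
have [t t0 hloc] := localization_eventually quarter0.
exists t; split => //.
apply: (@filterS3 _ _ _ _ _ _ _ _ hloc (nbhs_infty_ge 2) (cvgr_distC_le _ _ nu_lim _ t0)).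
move=> n hloc_n n2 hnu lam hlam lam_neq.
rewrite eq_sym in lam_neq; rewrite leNgt; apply/negP => lam_near.
have [u [hu u_unit]] := sym_unit_eigvec (Tmat_sym eps phi n) hlam.
have [hy _] := y_eigen n2.
have [a ha] := hloc_n (nu n) (y n) hnu hy (y_unit n2).
have [b hb] := hloc_n lam u (ltW lam_near) hu u_unit.
have orth := sym_eigvec_orth (Tmat_sym eps phi n) hy hu lam_neq.
exact: orthonormal_not_near_line (y_unit n2) u_unit orth ha hb.
Qed.

(* Part 2: y_n aligns with w_n, since its distance to span{w_n} is at most
   its distance to any multiple of w_n. *)
Lemma eigvec_alignment :
  (fun n => vnorm2 (y n - projspan (wvec n phi) (y n))) @ \oo --> (0 : R).
Proof.
apply/cvgrPdist_le => e e0.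
have [t t0 hloc] := localization_eventually (exprn_gt0 2 e0).
apply: (@filterS3 _ _ _ _ _ _ _ _ hloc (nbhs_infty_ge 2) (cvgr_distC_le _ _ nu_lim _ t0)).
move=> n hloc_n n2 hnu; have [hy _] := y_eigen n2.
have [c hc] := hloc_n (nu n) (y n) hnu hy (y_unit n2).
rewrite sub0r normrN ger0_norm ?sqrtr_ge0 // -(ger0_norm (ltW e0)) -sqrtr_sqr.
rewrite ler_sqrt ?sqr_ge0 //; apply: le_trans hc; apply: projspan_best.
by rewrite sqnorm2_gt0 wvec_neq0 // (leq_trans _ n2).
Qed.

End TridiagonalAsymptotics.

Theorem theorem3p3 (R : realType) (eps phi : R)
  (nu : nat -> R) (y : forall n : nat, 'cV[R]_n) :
  1 < `|phi| -> eps != phi ->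
  (forall n : nat, (2 <= n)%N ->
     Tmat n eps phi *m y n = nu n *: y n /\ vnorm2 (y n) = 1) ->
  nu @ \oo --> (phi + phi^-1) ->
  ((\forall n \near \oo, outlier (Tmat n eps phi) (nu n)) /\
   exists c : R, 0 < c /\
     \forall n \near \oo, forall lam : R,
       eigenvalue (Tmat n eps phi) lam -> lam != nu n ->
       c <= `|lam - (phi + phi^-1)|) /\
  (fun n => vnorm2 (y n - projspan (wvec n phi) (y n))) @ \oo --> (0 : R).
Proof.
move=> phi_gt1 eps_neq_phi y_eigen nu_lim; split; first split.
- exact (nu_outlier_eventually phi_gt1 y_eigen nu_lim).
- exact (eigenvalue_gap_eventually phi_gt1 eps_neq_phi y_eigen nu_lim).
- exact (eigvec_alignment phi_gt1 eps_neq_phi y_eigen nu_lim).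
Qed.
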